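(* Let $h,v$ be permutations of $\Lambda=\{1,\dots,d\}$ such that $\langle h,v\rangle$ acts transitively on $\Lambda$. Then for every integer $M\ge0$ the graph $\Gamma^M$ is strongly connected.
   Context: $\Gamma^M=\Gamma^M_{h,v}$ is the directed multigraph with vertex set $\Lambda$ in which each vertex $\lambda$ has exactly two outgoing edges: one labeled $L$ to $vh^M(\lambda)$ and one labeled $R$ to $vh^{M+1}(\lambda)$. *)

From mathcomp Require Import all_boot all_fingroup.
Set Implicit Arguments. Unset Strict Implicit. Unset Printing Implicit Defensive.

(* Edge labels / multiplicities are irrelevant for strong connectivity. *)
Definition gamma_edge (d : nat) (h v : {perm 'I_d}) (M : nat) : rel 'I_d :=
  fun x y => (y == v ((h ^+ M)%g x)) || (y == v ((h ^+ M.+1)%g x)).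

Definition strongly_connected (T : finType) (e : rel T) : Prop :=
  forall x y : T, connect e x y.

(* The set S of vertices reachable from a fixed vertex is closed under the two
   edge maps f = h^M v and g = h^(M+1) v. Closure of a subset of a finite set
   under a permutation is closure under the cyclic group it generates, so the
   stabiliser of S is a group; it contains f and g, hence h = g f^-1 and
   v = h^-M f, hence all of <h, v>, and transitivity forces S to be everything. *)
From mathcomp Require Import all_boot all_fingroup.

Set Implicit Arguments. Unset Strict Implicit. Unset Printing Implicit Defensive.

Local Open Scope group_scope.

Lemma astabs_permP (T : finType) (S : {set T}) (a : {perm T}) :
  reflect {in S, forall z, a z \in S} (a \in 'N(S | 'P)).
Proof.
apply: (iffP idP) => [aS z Sz | closedS].
  by rewrite -[a z]/(aperm z a) (astabs_act _ aS).
rewrite !inE /=; apply/subsetP => z Sz; rewrite inE; exact: closedS.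
Qed.

Lemma connect_astabs (T : finType) (e : rel T) (a : {perm T}) (x : T) :
  (forall z, e z (a z)) -> a \in 'N([set z | connect e x z] | 'P).
Proof.
move=> e_a; apply/astabs_permP => z; rewrite !inE => xz.
exact: connect_trans xz (connect1 (e_a z)).
Qed.

Lemma transitive_connect (T : finType) (e : rel T) (A : {set {perm T}}) :
  [transitive <<A>>, on [set: T] | 'P] ->
  (forall x, A \subset 'N([set z | connect e x z] | 'P)) ->
  forall x y, connect e x y.
Proof.
move=> trA A_reach x y.
have [a Aa ->] := atransP2 trA (in_setT x) (in_setT y).
have /astabs_permP a_reach : a \in 'N([set z | connect e x z] | 'P).
  by apply: subsetP Aa; rewrite gen_subG A_reach.
by have := a_reach x; rewrite !inE; apply; apply: connect0.
Qed.

Lemma gamma_edgeL (d : nat) (h v : {perm 'I_d}) (M : nat) (z : 'I_d) :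
  gamma_edge h v M z ((h ^+ M * v) z).
Proof. by rewrite /gamma_edge permM eqxx. Qed.

Lemma gamma_edgeR (d : nat) (h v : {perm 'I_d}) (M : nat) (z : 'I_d) :
  gamma_edge h v M z ((h ^+ M.+1 * v) z).
Proof. by rewrite /gamma_edge permM eqxx orbT. Qed.

Theorem lemma5p2 (d : nat) (h v : {perm 'I_d})
  (Htrans : [transitive <<[set h; v]>>, on [set: 'I_d] | 'P]) :
  forall M : nat, strongly_connected (gamma_edge h v M).
Proof.
move=> M; apply: (transitive_connect Htrans) => x.
set N := 'N(_ | 'P).
have fN : h ^+ M * v \in N by apply: connect_astabs => z; apply: gamma_edgeL.
have gN : h ^+ M.+1 * v \in N by apply: connect_astabs => z; apply: gamma_edgeR.
have hN : h \in N.
  have -> : h = (h ^+ M.+1 * v) * (h ^+ M * v)^-1.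
    by rewrite invMg mulgA mulgK expgS mulgK.
  by rewrite groupM ?groupV.
have vN : v \in N by rewrite -(mulKg (h ^+ M) v) groupM ?groupV ?groupX.
by apply/subsetP => a /set2P[] ->.
Qed.
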